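(* Let $\mathcal I$ be a canonical instance and run Algorithm 1 (described below) on it. At every moment of the run, every agent $a_{i,j}$ satisfies $v_{i,j}(A_{i,j})\le 3w_i$; in particular the final bundles satisfy $v_{i,j}(A_{i,j})\le 3w_i$. (Algorithm 1: start with empty bundles and all agents present; for $h=1,\dots,m$: let $\mathcal N_h$ be the present agents $a_{i,j}$ with $v_{i,j}(e_h)\le w_i$; give $e_h$ to an agent of $\mathcal N_h$ minimizing $v_{i,j}(e_h)$, ties broken in favor of the smallest weight and then arbitrarily; if the receiver now has $v_{i,j}(A_{i,j})\ge 3w_i$, she is removed from the present agents.)
   Context: Chore-allocation instance: agents, a finite set $\mathcal M=\{e_1,\dots,e_m\}$ of indivisible items, positive weights, additive cost functions $v:2^{\mathcal M}\to\mathbb R_{\ge0}$. The weighted maximin share of agent $a$ with weight $w_a$ and cost $v_a$ is $\mathsf{WMMS}_a=w_a\min_{\text{allocations }(B_b)_b}\max_{b}\frac{v_a(B_b)}{w_b}$, allocations being ordered partitions of $\mathcal M$ into one (possibly empty) bundle per agent. An instance is canonical if: (i) $\max$ weight is $w_1$, weights sum to $1$, and every weight equals $w_1/2^p$ for some nonnegative integer $p$; (ii) every agent's total cost $v(\mathcal M)=1$, and every single-item cost is either $0$ or $w_1/2^p$ for some nonnegative integer $p$; (iii) every agent has $v(e_1)\ge\cdots\ge v(e_m)$; (iv) every agent's $\mathsf{WMMS}$ equals her weight. Agents are partitioned into groups $G_1,\dots,G_k$ by weight, all agents of $G_i$ having weight $w_i$, with $w_1>\cdots>w_k$; $G_i=\{a_{i,1},\dots,a_{i,n_i}\}$,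 and $v_{i,j},A_{i,j}$ denote the cost function and current bundle of $a_{i,j}$. *)

From mathcomp Require Import all_boot all_order all_algebra.
Set Implicit Arguments. Unset Strict Implicit. Unset Printing Implicit Defensive.
Import Order.TTheory GRing.Theory Num.Theory.
Local Open Scope ring_scope.

(* Agents are 'I_n, items e_1,...,e_m are 'I_m (item e_{k+1} is the ordinal k).
   Weights w : 'I_n -> R, additive costs given by item costs v a e. *)

Section Defs.
Variables (R : realFieldType) (n m : nat).
Variables (w : 'I_n -> R) (v : 'I_n -> 'I_m -> R).

Definition cost (a : 'I_n) (B : {set 'I_m}) : R := \sum_(e in B) v a e.

Definition fmin (s : seq R) : R := foldr Num.min (head 0 s) s.

(* an allocation = ordered partition of the items into one (possibly empty)
   bundle per agent, i.e. an assignment of each item to an agent *)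
Definition alloc_bundle (f : {ffun 'I_m -> 'I_n}) (b : 'I_n) : {set 'I_m} :=
  [set e | f e == b].

(* max_b v_a(B_b)/w_b  (costs are nonnegative, so max with 0 is the max) *)
Definition wmms_val (a : 'I_n) (f : {ffun 'I_m -> 'I_n}) : R :=
  \big[Num.max/0]_(b : 'I_n) (cost a (alloc_bundle f b) / w b).

Definition WMMS (a : 'I_n) : R :=
  w a * fmin [seq wmms_val a f | f <- enum {: {ffun 'I_m -> 'I_n}}].

Definition canonical_instance : Prop :=
  (forall a, 0 < w a) /\
  (exists w1 : R,
     (exists a1, w a1 = w1) /\
     (forall a, w a <= w1) /\
     (\sum_(a : 'I_n) w a = 1) /\
     (forall a, exists p : nat, w a = w1 / 2 ^+ p) /\
     (forall a, cost a [set: 'I_m] = 1) /\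
     (forall a e, v a e = 0 \/ exists p : nat, v a e = w1 / 2 ^+ p)) /\
  (forall a (e e' : 'I_m), (e <= e')%N -> v a e' <= v a e) /\
  (forall a, WMMS a = w a).

(* A (partial) run of Algorithm 1 is described by h, the number of items
   e_1..e_h already handed out, and rec : 'I_m -> 'I_n, where rec k is the
   agent receiving item k (only the values rec k, k < h, are relevant). *)
Variable rec : 'I_m -> 'I_n.

Definition bundle (t : nat) (a : 'I_n) : {set 'I_m} :=
  [set e : 'I_m | (e < t)%N && (rec e == a)].

Definition present (t : nat) (a : 'I_n) : bool :=
  [forall k : 'I_m, ((k < t)%N && (rec k == a)) ==>
                    (cost a (bundle k.+1 a) < 3 * w a)].

Definition Ncand (k : 'I_m) : {set 'I_n} :=
  [set b | present k b && (v b k <= w b)].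

Definition valid_step (k : 'I_m) : Prop :=
  rec k \in Ncand k /\
  (forall b, b \in Ncand k -> v (rec k) k <= v b k) /\
  (forall b, b \in Ncand k -> v b k = v (rec k) k -> w (rec k) <= w b).

Definition valid_run (h : nat) : Prop :=
  (h <= m)%N /\ forall k : 'I_m, (k < h)%N -> valid_step k.

End Defs.

From mathcomp Require Import all_boot all_order all_algebra.
Import Order.TTheory GRing.Theory Num.Theory.
Set Implicit Arguments. Unset Strict Implicit.
Local Open Scope ring_scope.

(* When agent a receives item e_k she is still present, so her bundle costs
   less than 3 w_a, and v_a(e_k) <= w_a.  Every item she already holds came
   earlier, hence costs at least c := v_a(e_k); in a canonical instance all
   nonzero costs and all weights are of the form w_1 / 2^p, so the costs of
   her items and w_a are integer multiples of c.  A multiple of c below 3 w_a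
   is at most 3 w_a - c, so adding e_k keeps her bundle within 3 w_a. *)

Definition dyadic (R : realFieldType) (w1 x : R) : Prop :=
  exists p : nat, x = w1 / 2 ^+ p.

Lemma dyadic_multiple (R : realFieldType) (w1 c x : R) :
  0 < w1 -> dyadic w1 c -> dyadic w1 x -> c <= x -> exists N : nat, x = c *+ N.
Proof.
move=> w1_gt0 [q ->] [p ->] le_cx.
have le_pq : (p <= q)%N.
  rewrite leqNgt; apply/negP => lt_qp; move: le_cx.
  rewrite -(subnKC (ltnW lt_qp)) exprD invfM mulrA ler_pMr; last first.
    by rewrite divr_gt0 // exprn_gt0.
  rewrite invf_ge1 ?exprn_gt0 // leNgt exprn_egt1 ?ltr1n //.
  by rewrite negbK subn_eq0 leqNgt lt_qp.
exists (2 ^ (q - p))%N.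
rewrite -[_ *+ (2 ^ _)%N]mulr_natr natrX -(subnKC le_pq) addKn.
rewrite exprD invfM -!mulrA.
by rewrite mulVf ?mulr1 // expf_neq0 // pnatr_eq0.
Qed.

Section Algorithm.
Variables (R : realFieldType) (n m : nat).
Variables (w : 'I_n -> R) (v : 'I_n -> 'I_m -> R) (rec : 'I_m -> 'I_n).

Lemma bundle0 a : bundle rec 0 a = set0.
Proof. by apply/setP => e; rewrite !inE. Qed.

Lemma bundleSP t a :
  bundle rec t.+1 a = bundle rec t a \/
  exists e : 'I_m,
    [/\ val e = t, rec e = a & bundle rec t.+1 a = e |: bundle rec t a].
Proof.
have [lt_tm|le_mt] := ltnP t m; last first.
  left; apply/setP => e; rewrite !inE ltnS leq_eqVlt.
  by rewrite ltn_eqF // (leq_trans (ltn_ord e) le_mt).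
set e := Ordinal lt_tm.
have [rec_e|rec_e] := eqVneq (rec e) a.
  right; exists e; split=> //; apply/setP => e'; rewrite !inE ltnS leq_eqVlt.
  case: (eqVneq e' e) => [->|ne]; first by rewrite /= eqxx rec_e eqxx.
  by rewrite -[t]/(val e) val_eqE (negbTE ne).
left; apply/setP => e'; rewrite !inE ltnS leq_eqVlt.
case: (eqVneq e' e) => [->|ne]; first by rewrite (negbTE rec_e) !andbF.
by rewrite -[t]/(val e) val_eqE (negbTE ne).
Qed.

Lemma presentS t a : present w v rec t.+1 a -> present w v rec t a.
Proof.
move=> /forallP present_a; apply/forallP => k.
apply/implyP => /andP [lt_kt rec_k].
by have /implyP := present_a k; apply; rewrite rec_k ltnS ltnW.
Qed.

Lemma present_cost_lt a t :
  0 < w a -> present w v rec t a -> cost v a (bundle rec t a) < 3 * w a.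
Proof.
move=> w_gt0; elim: t => [|t IH] present_a.
  by rewrite bundle0 /cost big_set0 mulr_gt0.
have [->|[e [et rec_e _]]] := bundleSP t a; first exact/IH/presentS.
move/forallP: present_a => /(_ e) /implyP; rewrite -et; apply.
by rewrite ltnSn rec_e eqxx.
Qed.

Variable w1 : R.
Hypothesis w1_gt0 : 0 < w1.
Hypothesis w_gt0 : forall a, 0 < w a.
Hypothesis w_dyadic : forall a, dyadic w1 (w a).
Hypothesis v_dyadic : forall a e, v a e = 0 \/ dyadic w1 (v a e).
Hypothesis v_sorted : forall a (e e' : 'I_m), (e <= e')%N -> v a e' <= v a e.

Lemma cost_multiple a e :
  0 < v a e -> exists N : nat, cost v a (bundle rec e a) = v a e *+ N.
Proof.
move=> v_gt0; have [v0|dyadic_e] := v_dyadic a e.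
  by rewrite v0 ltxx in v_gt0.
apply: (big_ind (fun x => exists N : nat, x = v a e *+ N)).
- by exists 0%N.
- by move=> _ _ [N1 ->] [N2 ->]; exists (N1 + N2)%N; rewrite mulrnDr.
move=> e'; rewrite inE => /andP [lt_e'e _].
have le_ve : v a e <= v a e' by apply/v_sorted/ltnW.
have [v0|dyadic_e'] := v_dyadic a e'.
  by move: le_ve; rewrite v0 leNgt v_gt0.
exact: (dyadic_multiple w1_gt0 dyadic_e dyadic_e' le_ve).
Qed.

Lemma receive_cost_le (e : 'I_m) a :
  present w v rec e a -> v a e <= w a ->
  cost v a (e |: bundle rec e a) <= 3 * w a.
Proof.
move=> present_a le_vw; have lt_cost := present_cost_lt (w_gt0 a) present_a.
rewrite /cost big_setU1 /= -/(cost v a _); last by rewrite inE ltnn.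
have [v0|dyadic_e] := v_dyadic a e; first by rewrite v0 add0r ltW.
have v_gt0 : 0 < v a e by case: dyadic_e => p ->; rewrite divr_gt0 ?exprn_gt0.
have [M w_eq] := dyadic_multiple w1_gt0 dyadic_e (w_dyadic a) le_vw.
have [N cost_eq] := cost_multiple v_gt0.
move: lt_cost; rewrite cost_eq w_eq mulr_natl -mulrnA ltr_pMn2l // => lt_N.
by rewrite -mulrS ler_pMn2l.
Qed.

Lemma valid_run_cost_le h :
  valid_run w v rec h ->
  forall t a, (t <= h)%N -> cost v a (bundle rec t a) <= 3 * w a.
Proof.
move=> [_ valid] t a; elim: t => [|t IH] le_th.
  by rewrite bundle0 /cost big_set0 mulr_ge0 ?ltW.
have [->|[e [et rec_e ->]]] := bundleSP t a; first exact/IH/ltnW.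
have [] := valid e; first by rewrite et.
rewrite inE rec_e -et => /andP [present_a le_vw] _.
exact: receive_cost_le.
Qed.

End Algorithm.

Theorem mainTheorem8 (R : realFieldType) (n m : nat)
  (w : 'I_n -> R) (v : 'I_n -> 'I_m -> R) (rec : 'I_m -> 'I_n) (h : nat) :
  canonical_instance w v ->
  valid_run w v rec h ->
  forall a : 'I_n, cost v a (bundle rec h a) <= 3 * w a.
Proof.
move=> [w_gt0 [[w1 [[a1 w_a1] [_ [_ [w_dyadic [_ v_dyadic]]]]]] [v_sorted _]]].
have w1_gt0 : 0 < w1 by rewrite -w_a1.
move=> run a.
exact: (valid_run_cost_le w1_gt0 w_gt0 w_dyadic v_dyadic v_sorted run).
Qed.
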